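(* In the uKP setting described in the context, fix integers $s,l,m,n$. For $0\le k_2,k_3\le N$ define \[ \Psi(k_2,k_3)=\begin{cases} \max_{0\le i\le N-k_3}\tau_c(N-k_3-i,\,N-k_2+1+i) & (k_3\ge k_2 \text{ and } k_3\ge N-k_2),\\ \max_{0\le i\le k_2}\tau_c(N-k_2-k_3+i,\,N+1-i) & (N-k_2\ge k_3\ge k_2),\\ \max_{0\le i\le N-k_2}\tau_c(N-k_2-i,\,N-k_3+1+i) & (k_2\ge k_3\ge N-k_2),\\ \max_{0\le i\le k_3}\tau_c(N-k_2-k_3+i,\,N+1-i) & (k_2\ge k_3 \text{ and } N-k_2\ge k_3). \end{cases} \] Then \[ \tau(l,m+1,n+1)=\max_{0\le k_2,k_3\le N}\bigl(\Psi(k_2,k_3)-k_2a_2-k_3a_3\bigr), \] and for $1\le k_2,k_3\le N$: $\Psi(k_2-1,k_3)=\max(\Psi(k_2,k_3-1),\ \tau_c(N-k_3+1,N-k_2+1))$ if $k_2>k_3$; $\Psi(k_2-1,k_3)=\Psi(k_2,k_3-1)$ if $k_2=k_3$; $\max(\Psi(k_2-1,k_3),\ \tau_c(N-k_2+1,N-k_3+1))=\Psi(k_2,k_3-1)$ if $k_2<k_3$.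
   Context: Ultradiscrete permanent (UP): for a real $N\times N$ matrix $A=(a_{ij})$, $\max A\equiv\max_{\pi}\sum_{i=1}^N a_{i\pi(i)}$ over all permutations $\pi$ of $\{1,\dots,N\}$; $\max[\bm{b}_1\ \dots\ \bm{b}_N]$ is the UP of the matrix with columns $\bm{b}_j$. uKP setting: $N\ge1$; real parameters $a_1>a_2>a_3$ and arbitrary real $p_i,c_i,c'_i$ ($1\le i\le N$); for integers $l,m,n,s$, $\eta_i(l,m,n,s)=p_is+\max(0,p_i-a_1)l+\max(0,p_i-a_2)m+\max(0,p_i-a_3)n+c_i$, $\eta'_i(l,m,n,s)=-p_is+\max(0,-p_i-a_1)l+\max(0,-p_i-a_2)m+\max(0,-p_i-a_3)n+c'_i$, $\phi_i(l,m,n,s)=\max(\eta_i,\eta'_i)$, and $\tau(l,m,n)=\max[\phi_i(l,m,n,s+j-1)]_{1\le i,j\le N}$ ($s$ an auxiliary fixed integer). With $l,m,n,s$ fixed, put $\bm{\phi}(j)=(\phi_i(l,m,n,s+j))_{1\le i\le N}$, and for distinct $\alpha,\beta\in\{0,\dots,N+1\}$ let $\tau_c(\alpha,\beta)$ be the UP of the $N$ columns $\bm{\phi}(j)$, $j\in\{0,\dots,N+1\}\setminus\{\alpha,\beta\}$, taken in increasing order of $j$ (so $\tau_c(\alpha,\beta)=\tau_c(\beta,\alpha)$). *)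

From mathcomp Require Import all_boot all_order all_algebra all_fingroup.
From mathcomp Require Import reals.
Set Implicit Arguments. Unset Strict Implicit. Unset Printing Implicit Defensive.
Import Order.TTheory GRing.Theory Num.Theory.
Local Open Scope ring_scope.

Section UKP.
Variable R : realType.

(* max_{0 <= i <= K} F i  (a nonempty range; F 0 is used as the neutral start,
   which is harmless since max is idempotent). *)
Definition maxupto (K : nat) (F : nat -> R) : R :=
  \big[Num.max/F 0%N]_(0 <= i < K.+1) F i.

(* Ultradiscrete permanent: max over permutations pi of sum_i A i (pi i).
   The start value is the identity-permutation term (max is idempotent). *)
Definition UP (N : nat) (A : 'M[R]_N) : R :=
  \big[Num.max/(\sum_(i < N) A i i)]_(pi : 'S_N) \sum_(i < N) A i (pi i).

Variables (N : nat) (a1 a2 a3 : R) (p c c' : 'I_N -> R).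

Definition eta (i : 'I_N) (l m n s : int) : R :=
  p i * s%:~R + Num.max 0 (p i - a1) * l%:~R + Num.max 0 (p i - a2) * m%:~R
  + Num.max 0 (p i - a3) * n%:~R + c i.

Definition eta' (i : 'I_N) (l m n s : int) : R :=
  - p i * s%:~R + Num.max 0 (- p i - a1) * l%:~R + Num.max 0 (- p i - a2) * m%:~R
  + Num.max 0 (- p i - a3) * n%:~R + c' i.

Definition phi (i : 'I_N) (l m n s : int) : R :=
  Num.max (eta i l m n s) (eta' i l m n s).

(* tau(l,m,n) = UP [phi_i(l,m,n,s+j-1)]_{1<=i,j<=N}; with 0-based column
   index j : 'I_N the entry is phi_i(l,m,n,s+j). *)
Definition tau (l m n s : int) : R :=
  UP (\matrix_(i < N, j < N) phi i l m n (s + (j : nat)%:Z)).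

Definition tauc_cols (alpha beta : nat) : seq nat :=
  [seq j <- iota 0 N.+2 | (j != alpha) && (j != beta)].

Definition tauc (l m n s : int) (alpha beta : nat) : R :=
  UP (\matrix_(i < N, k < N)
        phi i l m n (s + (nth 0%N (tauc_cols alpha beta) k)%:Z)).

(* Psi(k2,k3), cases tested in the order given in the paper
   (the cases agree on their overlaps). *)
Definition Psi (l m n s : int) (k2 k3 : nat) : R :=
  if (k2 <= k3)%N && (N - k2 <= k3)%N then
    maxupto (N - k3) (fun i => tauc l m n s (N - k3 - i) (N - k2 + 1 + i))
  else if (k2 <= k3)%N && (k3 <= N - k2)%N then
    maxupto k2 (fun i => tauc l m n s (N - k2 - k3 + i) (N + 1 - i))
  else if (N - k2 <= k3)%N && (k3 <= k2)%N then
    maxupto (N - k2) (fun i => tauc l m n s (N - k2 - i) (N - k3 + 1 + i))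
  else
    maxupto k3 (fun i => tauc l m n s (N - k2 - k3 + i) (N + 1 - i)).

End UKP.

From Pilot Require Import Defs.
From mathcomp Require Import all_boot all_order all_algebra all_fingroup.
From mathcomp Require Import reals ring lra zify.
Set Implicit Arguments. Unset Strict Implicit. Unset Printing Implicit Defensive.
Import Order.TTheory GRing.Theory Num.Theory.
Local Open Scope ring_scope.

(* Since max(0, x) = max_{e in {0,1}} e x, every entry phi_i(l, m+1, n+1, t) is the
   maximum over e2, e3 in {0,1} of phi_i(l, m, n, t + e2 + e3) - e2 a2 - e3 a3. Hence
   tau(l, m+1, n+1) is the maximum, over 0/1 vectors e2, e3 with k2 and k3 ones, of the
   UP of the columns phi(j + e2 j + e3 j) minus (k2 a2 + k3 a3). Each phi_i is convex
   in its last argument, so moving one unit of shift from a column to its right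
   neighbour never decreases the UP (two equal columns spread apart, two crossing
   columns swap). Bubble-sorting the shifts therefore reaches the pattern
   [al <= j] + [be <= j], whose columns are exactly those of tau_c(al, be + 1), without
   increasing the number w = N - be of doubly shifted columns. The patterns reachable
   from (k2, k3) are those with w <= k2, k3 and k2 + k3 - w <= N, and Psi(k2, k3) is
   precisely the maximum of the corresponding tau_c; the recurrences compare these
   ranges of w. *)

Section NatShifts.
Local Open Scope nat_scope.

Lemma sum_bool_le n (P : pred nat) : \sum_(0 <= k < n) P k <= n.
Proof.
rewrite -[leqRHS]subn0 -[leqRHS]muln1 -sum_nat_const_nat.
by apply: leq_sum => k _; apply: leq_b1.
Qed.

Lemma sum_geq_indicator n a : \sum_(0 <= k < n) (a <= k) = n - a.
Proof.
elim: n => [|n IHn]; first by rewrite big_geq.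
by rewrite big_nat_recr //= IHn; case: leqP; lia.
Qed.

Lemma prefix_indicator n (P : pred nat) :
    (forall j k, j <= k < n -> P k -> P j) ->
  forall k, k < n -> P k = (k < \sum_(0 <= j < n) P j).
Proof.
elim: n => [//|n IHn] Pdown k; rewrite ltnS big_nat_recr //=.
case Pn: (P n).
  have Pnn j : j <= n -> P j by move=> jn; apply: Pdown Pn; rewrite jn /=.
  have -> : \sum_(0 <= j < n) P j = \sum_(0 <= j < n) 1.
    by apply: eq_big_nat => j /andP[_ jn]; rewrite Pnn // ltnW.
  by rewrite sum_nat_const_nat => kn; rewrite Pnn //; apply/esym; lia.
rewrite addn0 leq_eqVlt => /orP[/eqP->|kn]; first by rewrite Pn ltnNge sum_bool_le.
by apply: IHn kn => j k' /andP[jk k'n]; apply: Pdown; rewrite jk ltnW.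
Qed.

Lemma nondecreasing_le2_steps n (d : nat -> nat) :
    (forall j, j.+1 < n -> d j <= d j.+1) -> (forall k, k < n -> d k <= 2) ->
  exists al be, [/\ al <= be <= n & forall k, k < n -> d k = (al <= k) + (be <= k)].
Proof.
move=> dmono d2.
have dhomo : {in gtn n &, {homo d : j k / j <= k}}.
  apply: homo_leq_in => [//|y x z|i j _ jn k /andP[_ kj]|j _].
  - exact: leq_trans.
  - by rewrite inE (ltn_trans kj).
  by rewrite inE; apply: dmono.
have below t k : k < n -> (d k <= t) = (k < \sum_(0 <= j < n) (d j <= t)).
  apply: (@prefix_indicator n (fun j => d j <= t)) => j k' /andP[jk k'n].
  move=> dk; apply: leq_trans dk; apply: dhomo => //; rewrite inE.
  exact: leq_ltn_trans jk k'n.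
exists (\sum_(0 <= j < n) (d j <= 0)), (\sum_(0 <= j < n) (d j <= 1)); split.
  by rewrite sum_bool_le andbT; apply: leq_sum => j _; case: (d j).
move=> k kn; rewrite !(leqNgt _ k) -!below //; have := d2 k kn.
by case: (d k) => [|[|[|]]].
Qed.

Definition move_unit (d : nat -> nat) j k :=
  if k == j then (d j).-1 else if k == j.+1 then (d j.+1).+1 else d k.

Lemma sum_move_unit n (F : nat -> nat -> nat) d j : j.+1 < n ->
  \sum_(0 <= k < n) F k (move_unit d j k) + (F j (d j) + F j.+1 (d j.+1)) =
  \sum_(0 <= k < n) F k (d k) + (F j (d j).-1 + F j.+1 (d j.+1).+1).
Proof.
move=> jn; have jj1 : (j.+1 == j) = false by rewrite gtn_eqF.
have split2 G : \sum_(0 <= k < n) G k =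
    G j + G j.+1 + \sum_(k < n | (k != j :> nat) && (k != j.+1 :> nat)) G k.
  rewrite big_mkord (bigD1 (Ordinal (ltnW jn))) //= (bigD1 (Ordinal jn)) //=.
    by rewrite addnA.
  by rewrite -val_eqE /= jj1.
rewrite !split2 /move_unit eqxx jj1 eqxx (eq_bigr (fun k : 'I_n => F k (d k))) /=.
  by lia.
by move=> k /andP[/negbTE-> /negbTE->].
Qed.

Lemma move_unit_invariants n d j :
    j.+1 < n -> d j.+1 < d j -> (forall k, k < n -> d k <= 2) ->
  [/\ forall k, k < n -> move_unit d j k <= 2,
      \sum_(0 <= k < n) move_unit d j k = \sum_(0 <= k < n) d k,
      \sum_(0 <= k < n) (move_unit d j k == 2) <= \sum_(0 <= k < n) (d k == 2) &
      \sum_(0 <= k < n) k * move_unit d j k = (\sum_(0 <= k < n) k * d k).+1].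
Proof.
move=> jn dj d2; have dj2 := d2 j (ltnW jn); split.
- move=> k kn; rewrite /move_unit.
  by case: eqP => _; [lia | case: eqP => _; [lia | exact: d2]].
- by have := sum_move_unit (fun _ x => x) d jn; lia.
- have := sum_move_unit (fun _ x => (x == 2 : nat)) d jn; move: dj dj2.
  by case: (d j) (d j.+1) => [|[|[|x]]] [|[|[|y]]] //=; lia.
- have := sum_move_unit (fun k x => k * x) d jn; move: dj.
  by case: (d j) => [|x] //=; nia.
Qed.

Lemma tauc_colsE N al be : al < be <= N.+1 ->
  tauc_cols N al be = iota 0 al ++ iota al.+1 (be - al.+1) ++ iota be.+1 (N.+1 - be).
Proof.
case/andP=> ab bN.
rewrite /tauc_cols (_ : N.+2 = al + (1 + (be - al.+1 + (1 + (N.+1 - be))))); last lia.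
rewrite !iotaD /= add0n !addn1 (_ : al.+1 + (be - al.+1) = be); last lia.
rewrite !filter_cat /= eqxx /= filter_cat /= eqxx andbF /=.
rewrite !(all_filterP _) //; apply/allP => x; rewrite mem_iota => /andP[xl xr];
  apply/andP; split; apply/eqP; lia.
Qed.

Lemma nth_tauc_cols N al be k : al < be <= N.+1 -> k < N ->
  nth 0 (tauc_cols N al be) k = k + (al <= k) + (be <= k.+1).
Proof.
move=> albe kN; rewrite tauc_colsE // !nth_cat !size_iota.
case: ltnP => kal; first by rewrite nth_iota //; lia.
case: ltnP => kbe; rewrite nth_iota; lia.
Qed.
End NatShifts.

Section MaxZero.
Variable R : realDomainType.
Implicit Types (x E F P : R).

Lemma natr_le_max0 (b : bool) x : b%:R * x <= Num.max 0 x.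
Proof. by case: b; rewrite le_max ?mul1r ?mul0r lexx ?orbT. Qed.

Lemma natr_ge0_mul x : (0 <= x)%R%:R * x = Num.max 0 x.
Proof. by case: leP; rewrite ?mul1r ?mul0r. Qed.

Lemma shift_max_le E F P b2 b3 (e2 e3 : bool) :
  Num.max (E + (e2 + e3)%:R * P) (F - (e2 + e3)%:R * P) - e2%:R * b2 - e3%:R * b3 <=
  Num.max (E + Num.max 0 (P - b2) + Num.max 0 (P - b3))
          (F + Num.max 0 (- P - b2) + Num.max 0 (- P - b3)).
Proof.
have := natr_le_max0 e2 (P - b2); have := natr_le_max0 e3 (P - b3).
have := natr_le_max0 e2 (- P - b2); have := natr_le_max0 e3 (- P - b3).
rewrite natrD => *.
rewrite !addr_maxl ge_max !le_max; apply/andP; split; apply/orP; [left|right]; lra.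
Qed.

Lemma shift_max_attained E F P b2 b3 : exists e2 e3 : bool,
  Num.max (E + Num.max 0 (P - b2) + Num.max 0 (P - b3))
          (F + Num.max 0 (- P - b2) + Num.max 0 (- P - b3)) =
  Num.max (E + (e2 + e3)%:R * P) (F - (e2 + e3)%:R * P) - e2%:R * b2 - e3%:R * b3.
Proof.
have [hBA|hAB] := leP (F + Num.max 0 (- P - b2) + Num.max 0 (- P - b3))
                      (E + Num.max 0 (P - b2) + Num.max 0 (P - b3)).
  exists (0 <= P - b2)%R, (0 <= P - b3)%R; rewrite !addr_maxl natrD [RHS]max_l.
    by have := natr_ge0_mul (P - b2); have := natr_ge0_mul (P - b3); lra.
  have := natr_ge0_mul (P - b2); have := natr_ge0_mul (P - b3).
  have := natr_le_max0 (0 <= P - b2)%R (- P - b2).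
  have := natr_le_max0 (0 <= P - b3)%R (- P - b3); lra.
exists (0 <= - P - b2)%R, (0 <= - P - b3)%R; rewrite !addr_maxl natrD [RHS]max_r.
  by have := natr_ge0_mul (- P - b2); have := natr_ge0_mul (- P - b3); lra.
have := natr_ge0_mul (- P - b2); have := natr_ge0_mul (- P - b3).
have := natr_le_max0 (0 <= - P - b2)%R (P - b2).
have := natr_le_max0 (0 <= - P - b3)%R (P - b3); lra.
Qed.
End MaxZero.

Section Permanent.
Variable R : realType.

Lemma le_maxupto K (F : nat -> R) i : (i <= K)%N -> F i <= maxupto K F.
Proof. by move=> iK; apply: le_bigmax_seq; rewrite ?mem_index_iota. Qed.

Lemma maxupto_le K (F : nat -> R) z :
  (forall i, (i <= K)%N -> F i <= z) -> maxupto K F <= z.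
Proof.
move=> Fz; rewrite /maxupto big_seq; apply: bigmax_le => [|i]; first exact: Fz.
by rewrite mem_index_iota => /andP[_]; apply: Fz.
Qed.

Variable N : nat.
Implicit Type A : 'M[R]_N.

Lemma le_UP A (pi : 'S_N) : \sum_i A i (pi i) <= UP A.
Proof. exact: le_bigmax. Qed.

Lemma UP_le A z : (forall pi : 'S_N, \sum_i A i (pi i) <= z) -> UP A <= z.
Proof.
move=> Az; apply: bigmax_le => [|pi _]; last exact: Az.
by under eq_bigr do rewrite -[X in A _ X]perm1; exact: Az.
Qed.

Definition UPcol (f : 'I_N -> nat -> R) (c : nat -> nat) : R :=
  UP (\matrix_(i < N, k < N) f i (c k)).

Lemma eq_UPcol f (c c' : nat -> nat) : (forall k : 'I_N, c k = c' k) -> UPcol f c = UPcol f c'.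
Proof. by move=> cc'; congr UP; apply/matrixP => i k; rewrite !mxE cc'. Qed.

Lemma UPcol_exchange f (c c' : nat -> nat) (a b : 'I_N) :
  a != b -> (forall k : 'I_N, k != a -> k != b -> c' k = c k) ->
  (forall r q : 'I_N, f r (c a) + f q (c b) <=
     Num.max (f r (c' a) + f q (c' b)) (f r (c' b) + f q (c' a))) ->
  UPcol f c <= UPcol f c'.
Proof.
move=> ab cc' fab; apply: UP_le => pi.
set r := (pi^-1 a)%g; set q := (pi^-1 b)%g.
have [pir piq] : pi r = a /\ pi q = b by rewrite !permKV.
have rq : r != q by rewrite (inj_eq perm_inj).
have piD i : i != r -> i != q -> pi i != a /\ pi i != b.
  by rewrite -{1}pir -{1}piq !(inj_eq perm_inj).
have split2 (F : 'I_N -> R) :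
    \sum_i F i = F r + F q + \sum_(i | (i != r) && (i != q)) F i.
  by rewrite (bigD1 r) //= (bigD1 q) 1?eq_sym //= addrA.
set M' := \matrix_(i < N, k < N) f i (c' k).
have rest sg : (forall i, i != r -> i != q -> sg i = pi i) ->
    \sum_(i | (i != r) && (i != q)) M' i (sg i) =
    \sum_(i | (i != r) && (i != q)) f i (c (pi i)).
  move=> sgpi; apply: eq_bigr => i /andP[ir iq].
  by have [? ?] := piD i ir iq; rewrite mxE sgpi // cc'.
have := le_UP M' pi; have := le_UP M' (pi * tperm a b)%g.
rewrite !split2 !mxE !permM pir piq tpermL tpermR !rest // => [|i ir iq]; last first.
  by have [? ?] := piD i ir iq; rewrite permM tpermD // eq_sym.
move=> up1 up2; under eq_bigr do rewrite mxE.
have := fab r q; rewrite le_max => /orP[] fab';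
  [apply: le_trans up2 | apply: le_trans up1]; lra.
Qed.

Lemma sum_perm_nat (pi : 'S_N) (g : nat -> nat) :
  (\sum_i g (pi i) = \sum_(0 <= k < N) g k)%N.
Proof. by rewrite big_mkord [RHS](reindex_inj (@perm_inj _ pi)). Qed.

Lemma sum_shift_perm f (pi : 'S_N) (e2 e3 : nat -> bool) (b2 b3 : R) :
  \sum_i (f i (pi i + e2 (pi i) + e3 (pi i))%N - (e2 (pi i))%:R * b2 - (e3 (pi i))%:R * b3) =
  \sum_i (\matrix_(i, k) f i (k + e2 k + e3 k)%N) i (pi i)
    - (\sum_(0 <= k < N) e2 k)%N%:R * b2 - (\sum_(0 <= k < N) e3 k)%N%:R * b3.
Proof.
rewrite !sumrB -!(sum_perm_nat pi) !natr_sum !mulr_suml.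
by congr (_ - _ - _); apply: eq_bigr => i _; rewrite mxE.
Qed.

End Permanent.

Section ShiftSort.
Variables (R : realType) (N : nat) (f : 'I_N -> nat -> R).

Definition dconvex (g : nat -> R) := forall t, g t.+1 + g t.+1 <= g t + g t.+2.

Lemma dconvex_spread (g h : nat -> R) t : dconvex g -> dconvex h ->
  g t.+1 + h t.+1 <= Num.max (g t + h t.+2) (g t.+2 + h t).
Proof.
move=> /(_ t) gt /(_ t) ht; rewrite le_max.
by case: (leP (g t + h t.+2) (g t.+2 + h t)) => ?; apply/orP; [right | left]; lra.
Qed.

Lemma dconvex_max_affine E F P :
  dconvex (fun t => Num.max (E + t%:R * P) (F - t%:R * P)).
Proof.
move=> t /=; rewrite !mulrSr; set x := t%:R.
have [_|_] := leP (E + (x + 1) * P) (F - (x + 1) * P).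
  rewrite [leLHS](_ : _ = (F - x * P) + (F - (x + 1 + 1) * P)); last ring.
  by apply: lerD; rewrite le_max lexx orbT.
rewrite [leLHS](_ : _ = (E + x * P) + (E + (x + 1 + 1) * P)); last ring.
by apply: lerD; rewrite le_max lexx.
Qed.

Hypothesis f_convex : forall i, dconvex (f i).

Lemma UPcol_move_unit d j : (j.+1 < N)%N -> (d j.+1 < d j <= (d j.+1).+2)%N ->
  UPcol f (fun k => k + d k)%N <= UPcol f (fun k => k + move_unit d j k)%N.
Proof.
move=> jN /andP[dlt dle].
apply: (@UPcol_exchange _ _ _ _ _ (Ordinal (ltnW jN)) (Ordinal jN)) => /=.
- by rewrite -val_eqE /= ltn_eqF.
- by move=> k; rewrite -!val_eqE /= /move_unit => /negbTE-> /negbTE->.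
rewrite /move_unit eqxx gtn_eqF // eqxx => r q.
have [->|->] : d j = (d j.+1).+1 \/ d j = (d j.+1).+2 by lia.
  by rewrite /= addSn !addnS; apply: dconvex_spread.
by rewrite /= !addSn !addnS le_max lexx orbT.
Qed.

(* Bubble sort: each [move_unit] raises the bounded potential \sum_k k * d k. *)
Lemma UPcol_sort_shift d : (forall k, k < N -> d k <= 2)%N ->
  exists d' : nat -> nat,
  [/\ forall j, (j.+1 < N -> d' j <= d' j.+1)%N,
      forall k, (k < N -> d' k <= 2)%N,
      (\sum_(0 <= k < N) d' k = \sum_(0 <= k < N) d k)%N,
      (\sum_(0 <= k < N) (d' k == 2) <= \sum_(0 <= k < N) (d k == 2))%N &
      UPcol f (fun k => k + d k)%N <= UPcol f (fun k => k + d' k)%N].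
Proof.
have [M] := ubnP (N * (N * 2) - \sum_(0 <= k < N) k * d k)%N.
elim: M d => // M IHM d pot d2.
have [/existsP[j /andP[jN dj]]|nodesc] :=
  boolP [exists j : 'I_N, (j.+1 < N) && (d j.+1 < d j)]%N.
  have [d2' sum_eq twos_le pot_succ] := move_unit_invariants jN dj d2.
  have potN : (\sum_(0 <= k < N) k * move_unit d j k <= N * (N * 2))%N.
    apply: (@leq_trans (\sum_(0 <= k < N) N * 2)); last by rewrite sum_nat_const_nat subn0.
    rewrite !big_mkord; apply: leq_sum => k _.
    exact: leq_mul (ltnW (ltn_ord k)) (d2' k (ltn_ord k)).
  have [d' [d'mono d'2 s1 s2 d'max]] := IHM (move_unit d j) ltac:(lia) d2'.
  exists d'; split=> //; [lia | lia | apply: le_trans d'max].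
  by apply: UPcol_move_unit => //; rewrite dj /=; have := d2 j (ltnW jN); lia.
exists d; split=> // j jN.
by move/existsPn: nodesc => /(_ (Ordinal (ltnW jN))) /=; rewrite jN -leqNgt.
Qed.

Lemma UPcol_shift_le_tauc_cols d : (forall k, k < N -> d k <= 2)%N ->
  exists al be, [/\ (al <= be <= N)%N,
    UPcol f (fun k => k + d k)%N <= UPcol f (nth 0%N (tauc_cols N al be.+1)),
    (\sum_(0 <= k < N) d k = (N - al) + (N - be))%N &
    (N - be <= \sum_(0 <= k < N) (d k == 2))%N].
Proof.
move=> d2; have [d' [d'mono d'2 <- c2 le_d']] := UPcol_sort_shift d2.
have [al [be [albe d'E]]] := nondecreasing_le2_steps d'mono d'2.
exists al, be; split=> //.
- apply: le_trans le_d' _; rewrite le_eqVlt; apply/orP; left; apply/eqP.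
  by apply: eq_UPcol => k; rewrite nth_tauc_cols // ?d'E // addnA.
- rewrite -!sum_geq_indicator -big_split; apply: eq_big_nat => k /andP[_ kN].
  exact: d'E.
- apply: leq_trans c2; rewrite -sum_geq_indicator leq_eqVlt; apply/orP; left.
  apply/eqP/eq_big_nat => k /andP[_ kN]; rewrite d'E //.
  by case: leqP; case: leqP => //; lia.
Qed.

End ShiftSort.

Section UKP.
Variables (R : realType) (N : nat) (a1 a2 a3 : R) (p c c' : 'I_N -> R) (l m n s : int).

Local Notation phi := (phi a1 a2 a3 p c c').
Local Notation tauc := (tauc a1 a2 a3 p c c' l m n s).
Local Notation Psi := (Psi a1 a2 a3 p c c' l m n s).
Local Notation tau := (tau a1 a2 a3 p c c' l).

Lemma eta_shift i (t : int) (k : nat) :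
  eta a1 a2 a3 p c i l m n (t + k%:Z) = eta a1 a2 a3 p c i l m n t + k%:R * p i.
Proof. by rewrite /eta intrD -pmulrn; ring. Qed.

Lemma eta'_shift i (t : int) (k : nat) :
  eta' a1 a2 a3 p c' i l m n (t + k%:Z) = eta' a1 a2 a3 p c' i l m n t - k%:R * p i.
Proof. by rewrite /eta' intrD -pmulrn; ring. Qed.

Lemma eta_succ i t :
  eta a1 a2 a3 p c i l (m + 1) (n + 1) t =
  eta a1 a2 a3 p c i l m n t + Num.max 0 (p i - a2) + Num.max 0 (p i - a3).
Proof. by rewrite /eta !intrD; ring. Qed.

Lemma eta'_succ i t :
  eta' a1 a2 a3 p c' i l (m + 1) (n + 1) t =
  eta' a1 a2 a3 p c' i l m n t + Num.max 0 (- p i - a2) + Num.max 0 (- p i - a3).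
Proof. by rewrite /eta' !intrD; ring. Qed.

Lemma phi_succ_le i t (e2 e3 : bool) :
  phi i l m n (t + (e2 + e3)%N%:Z) - e2%:R * a2 - e3%:R * a3 <= phi i l (m + 1) (n + 1) t.
Proof. by rewrite /phi eta_succ eta'_succ eta_shift eta'_shift; apply: shift_max_le. Qed.

Lemma phi_succ_attained i t : exists e2 e3 : bool,
  phi i l (m + 1) (n + 1) t = phi i l m n (t + (e2 + e3)%N%:Z) - e2%:R * a2 - e3%:R * a3.
Proof.
rewrite /phi eta_succ eta'_succ.
have [e2 [e3 ->]] := shift_max_attained (eta a1 a2 a3 p c i l m n t)
  (eta' a1 a2 a3 p c' i l m n t) (p i) a2 a3.
by exists e2, e3; rewrite eta_shift eta'_shift.
Qed.

Definition column i (t : nat) := phi i l m n (s + t%:Z).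

Lemma tauc_UPcol al be : tauc al be = UPcol column (nth 0%N (tauc_cols N al be)).
Proof. by []. Qed.

Lemma column_convex i : dconvex (column i).
Proof.
move=> t; rewrite /column /phi !eta_shift !eta'_shift.
exact: dconvex_max_affine.
Qed.

Lemma UPcol_shift_le_tau (e2 e3 : nat -> bool) :
  UPcol column (fun k => k + e2 k + e3 k)%N
    - (\sum_(0 <= k < N) e2 k)%N%:R * a2 - (\sum_(0 <= k < N) e3 k)%N%:R * a3
  <= tau (m + 1) (n + 1) s.
Proof.
rewrite !lerBlDr; apply: UP_le => pi; rewrite -!lerBlDr -sum_shift_perm.
apply: le_trans (le_UP _ pi); apply: ler_sum => i _; rewrite mxE /column.
by rewrite -addnA PoszD addrA; apply: phi_succ_le.
Qed.

Lemma tau_le_UPcol_shift z :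
    (forall e2 e3 : nat -> bool, UPcol column (fun k => k + e2 k + e3 k)%N
      - (\sum_(0 <= k < N) e2 k)%N%:R * a2 - (\sum_(0 <= k < N) e3 k)%N%:R * a3 <= z) ->
  tau (m + 1) (n + 1) s <= z.
Proof.
move=> UPz; apply: UP_le => pi.
have opt i : exists e : bool * bool, phi i l (m + 1) (n + 1) (s + (pi i)%:Z) =
    column i (pi i + e.1 + e.2) - e.1%:R * a2 - e.2%:R * a3.
  have [e2 [e3 ->]] := phi_succ_attained i (s + (pi i)%:Z).
  by exists (e2, e3); rewrite /column /= -addnA (PoszD (pi i)) addrA.
have [g gE] := fin_all_exists opt.
pose e2 k := if insub k is Some j then (g (pi^-1 j)%g).1 else false.
pose e3 k := if insub k is Some j then (g (pi^-1 j)%g).2 else false.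
apply: le_trans (UPz e2 e3).
rewrite (eq_bigr (fun i => column i (pi i + e2 (pi i) + e3 (pi i))%N
    - (e2 (pi i))%:R * a2 - (e3 (pi i))%:R * a3)) => [|i _]; last first.
  by rewrite mxE gE /e2 /e3 valK permK.
by rewrite sum_shift_perm !lerD2r; apply: le_UP.
Qed.

(* The term of [Psi] whose doubly shifted columns are the last [w] of [N], the
   total shift being [S]. *)
Definition tauw (S w : nat) := tauc (N - (S - w)) (N + 1 - w).

Lemma tauw_le_Psi k2 k3 w : (w <= k2)%N -> (w <= k3)%N -> (k2 + k3 - w <= N)%N ->
  tauw (k2 + k3) w <= Psi k2 k3.
Proof.
move=> wk2 wk3 SN.
have le_at K (g h : nat -> nat) i : (i <= K)%N ->
    (N - (k2 + k3 - w) = g i)%N -> (N + 1 - w = h i)%N ->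
    tauw (k2 + k3) w <= maxupto K (fun i => tauc (g i) (h i)).
  by move=> iK eg eh; rewrite /tauw eg eh; apply: (le_maxupto (fun i => tauc (g i) (h i))).
rewrite /Psi; case: ifP => [/andP[? ?]|C1].
  by apply: (le_at _ _ _ (k2 - w)%N); lia.
case: ifP => [/andP[? ?]|C2].
  by apply: (le_at _ _ _ w); lia.
case: ifP => [/andP[? ?]|C3].
  by apply: (le_at _ _ _ (k3 - w)%N); lia.
by apply: (le_at _ _ _ w); lia.
Qed.

Lemma Psi_le k2 k3 z : (k2 <= N)%N -> (k3 <= N)%N ->
    (forall w, (w <= k2)%N -> (w <= k3)%N -> (k2 + k3 - w <= N)%N ->
      tauw (k2 + k3) w <= z) ->
  Psi k2 k3 <= z.
Proof.
move=> k2N k3N tauw_z.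
have le_all K (g h w : nat -> nat) : (forall i, i <= K ->
      [/\ w i <= k2, w i <= k3, k2 + k3 - w i <= N,
          g i = N - (k2 + k3 - w i) & h i = N + 1 - w i])%N ->
    maxupto K (fun i => tauc (g i) (h i)) <= z.
  by move=> gh; apply: maxupto_le => i /gh[? ? ? -> ->]; apply: tauw_z.
rewrite /Psi; case: ifP => [/andP[? ?]|C1].
  by apply: (le_all _ _ _ (fun i => k2 - i)%N) => i ?; split; lia.
case: ifP => [/andP[? ?]|C2].
  by apply: (le_all _ _ _ id) => i ?; split; lia.
case: ifP => [/andP[? ?]|C3].
  by apply: (le_all _ _ _ (fun i => k3 - i)%N) => i ?; split; lia.
by apply: (le_all _ _ _ id) => i ?; split; lia.
Qed.

Lemma tauc_sym al be : tauc al be = tauc be al.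
Proof. by rewrite /Defs.tauc /tauc_cols (eq_filter (fun j => andbC _ _)). Qed.

Lemma Psi_le_Psi k2 k3 k2' k3' : (k2 <= N)%N -> (k3 <= N)%N ->
  (k2 + k3 = k2' + k3')%N -> (minn k2 k3 <= minn k2' k3')%N -> Psi k2 k3 <= Psi k2' k3'.
Proof.
move=> k2N k3N eS lemin; apply: Psi_le => // w wk2 wk3 SN.
by rewrite eS; apply: tauw_le_Psi; lia.
Qed.

Lemma Psi_rec_gt k2 k3 : (1 <= k2 <= N)%N -> (1 <= k3 <= N)%N -> (k3 < k2)%N ->
  Psi k2.-1 k3 = Num.max (Psi k2 k3.-1) (tauc (N - k3 + 1) (N - k2 + 1)).
Proof.
move=> /andP[k2_1 k2N] /andP[k3_1 k3N] k32.
have eS : (k2 + k3.-1 = k2.-1 + k3)%N by lia.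
have -> : tauc (N - k3 + 1) (N - k2 + 1) = tauw (k2.-1 + k3) k3.
  by rewrite tauc_sym /tauw; apply: (f_equal2 (fun x y => tauc x y)); lia.
apply/le_anti/andP; split.
  apply: Psi_le; [lia | lia |] => w wk2 wk3 SN; rewrite le_max.
  have [wk3'|->] : (w < k3)%N \/ w = k3 by lia.
    by rewrite -eS tauw_le_Psi //; lia.
  by rewrite lexx orbT.
rewrite ge_max Psi_le_Psi ?tauw_le_Psi //; lia.
Qed.

Lemma Psi_rec_eq k2 k3 : (1 <= k2 <= N)%N -> (1 <= k3 <= N)%N -> k2 = k3 ->
  Psi k2.-1 k3 = Psi k2 k3.-1.
Proof.
move=> /andP[k2_1 k2N] /andP[k3_1 k3N] k23.
by apply/le_anti; rewrite !Psi_le_Psi //; lia.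
Qed.

Lemma Psi_rec_lt k2 k3 : (1 <= k2 <= N)%N -> (1 <= k3 <= N)%N -> (k2 < k3)%N ->
  Num.max (Psi k2.-1 k3) (tauc (N - k2 + 1) (N - k3 + 1)) = Psi k2 k3.-1.
Proof.
move=> /andP[k2_1 k2N] /andP[k3_1 k3N] k23.
have eS : (k2 + k3.-1 = k2.-1 + k3)%N by lia.
have -> : tauc (N - k2 + 1) (N - k3 + 1) = tauw (k2 + k3.-1) k2.
  by rewrite tauc_sym /tauw; apply: (f_equal2 (fun x y => tauc x y)); lia.
apply/le_anti/andP; split.
  rewrite ge_max Psi_le_Psi ?tauw_le_Psi //; lia.
apply: Psi_le; [lia | lia |] => w wk2 wk3 SN; rewrite le_max.
have [wk2'|->] : (w < k2)%N \/ w = k2 by lia.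
  by rewrite eS tauw_le_Psi //; lia.
by rewrite lexx orbT.
Qed.

Lemma maxupto_Psi_le_tau :
  maxupto N (fun k2 => maxupto N (fun k3 => Psi k2 k3 - k2%:R * a2 - k3%:R * a3))
  <= tau (m + 1) (n + 1) s.
Proof.
apply: maxupto_le => k2 k2N; apply: maxupto_le => k3 k3N.
rewrite !lerBlDr; apply: Psi_le => // w wk2 wk3 SN; rewrite -!lerBlDr.
pose al := (N - (k2 + k3 - w))%N.
pose e2 k := (N - k2 <= k)%N.
pose e3 k := (N - w <= k)%N || (al <= k < N - k2)%N.
have e23 k : (e2 k + e3 k = (al <= k) + (N - w <= k))%N.
  by rewrite /e2 /e3 /al; case: leqP; case: leqP; case: leqP => /=; lia.
have sum2 : (\sum_(0 <= k < N) e2 k = k2)%N by rewrite sum_geq_indicator; lia.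
have sum3 : (\sum_(0 <= k < N) e3 k = k3)%N.
  have : (\sum_(0 <= k < N) (e2 k + e3 k) =
      \sum_(0 <= k < N) ((al <= k) + (N - w <= k)))%N by apply: eq_bigr => k _.
  by rewrite !big_split /= !sum_geq_indicator; lia.
have := UPcol_shift_le_tau e2 e3; rewrite sum2 sum3 /tauw tauc_UPcol.
rewrite (@eq_UPcol _ _ _ _ (nth 0%N (tauc_cols N al (N + 1 - w)))) // => k.
rewrite nth_tauc_cols ?ltn_ord //; last lia.
by rewrite -addnA e23 -addnA addn1 subSn ?ltnS //; lia.
Qed.

Lemma tau_le_maxupto_Psi :
  tau (m + 1) (n + 1) s <=
  maxupto N (fun k2 => maxupto N (fun k3 => Psi k2 k3 - k2%:R * a2 - k3%:R * a3)).
Proof.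
apply: tau_le_UPcol_shift => e2 e3.
set k2 := (\sum_(0 <= k < N) e2 k)%N; set k3 := (\sum_(0 <= k < N) e3 k)%N.
have [k2N k3N] : (k2 <= N /\ k3 <= N)%N by rewrite !sum_bool_le.
have d2 k : (k < N -> e2 k + e3 k <= 2)%N by case: (e2 k); case: (e3 k).
have [al [be [/andP[albe beN] le_cols sumd twos]]] := UPcol_shift_le_tauc_cols column_convex d2.
rewrite big_split /= -/k2 -/k3 in sumd.
have [two2 two3] : (\sum_(0 <= k < N) (e2 k + e3 k == 2) <= k2 /\
                    \sum_(0 <= k < N) (e2 k + e3 k == 2) <= k3)%N.
  by split; apply: leq_sum => k _; case: (e2 k); case: (e3 k).
apply: le_trans (le_maxupto _ k2N) => /=; apply: le_trans (le_maxupto _ k3N) => /=.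
rewrite !lerD2r (@eq_UPcol _ _ _ _ (fun k => k + (e2 k + e3 k))%N) => [|k]; last first.
  by rewrite addnA.
apply: le_trans le_cols _.
have := @tauw_le_Psi k2 k3 (N - be); rewrite /tauw tauc_UPcol.
rewrite (_ : N - (k2 + k3 - (N - be)) = al)%N; last lia.
rewrite (_ : N + 1 - (N - be) = be.+1)%N; last lia.
apply; lia.
Qed.

End UKP.

Theorem lemma7 (R : realType) (N : nat) (a1 a2 a3 : R) (p c c' : 'I_N -> R)
    (l m n s : int) :
  (1 <= N)%N -> a1 > a2 -> a2 > a3 ->
  tau a1 a2 a3 p c c' l (m + 1) (n + 1) s =
    maxupto N (fun k2 => maxupto N (fun k3 =>
      Psi a1 a2 a3 p c c' l m n s k2 k3 - k2%:R * a2 - k3%:R * a3))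
  /\ (forall k2 k3 : nat, (1 <= k2 <= N)%N -> (1 <= k3 <= N)%N ->
      [/\ (k2 > k3)%N ->
            Psi a1 a2 a3 p c c' l m n s k2.-1 k3 =
            Num.max (Psi a1 a2 a3 p c c' l m n s k2 k3.-1)
                    (tauc a1 a2 a3 p c c' l m n s (N - k3 + 1) (N - k2 + 1)),
          k2 = k3 ->
            Psi a1 a2 a3 p c c' l m n s k2.-1 k3 =
            Psi a1 a2 a3 p c c' l m n s k2 k3.-1
        & (k2 < k3)%N ->
            Num.max (Psi a1 a2 a3 p c c' l m n s k2.-1 k3)
                    (tauc a1 a2 a3 p c c' l m n s (N - k2 + 1) (N - k3 + 1)) =
            Psi a1 a2 a3 p c c' l m n s k2 k3.-1]).
Proof.
move=> _ _ _; split.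
  by apply/le_anti; rewrite tau_le_maxupto_Psi maxupto_Psi_le_tau.
by move=> k2 k3 k2N k3N; split; [exact: Psi_rec_gt | exact: Psi_rec_eq | exact: Psi_rec_lt].
Qed.
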